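(* Let $\mathcal{X}$ be a nonempty finite set and let $k$ be a strong kernel on $\mathcal{X}$. Then the image of $k$ has at most $2|\mathcal{X}|-1$ elements, i.e. $|\{k(x,y): x,y\in\mathcal{X}\}|\le 2|\mathcal{X}|-1$.
   Context: A strong kernel on a set $\mathcal{X}$ is a symmetric function $k:\mathcal{X}\times\mathcal{X}\to\mathbb{R}_{\ge 0}$ such that $k(x,y)\ge\min\{k(x,z),k(z,y)\}$ for all $x,y,z\in\mathcal{X}$. *)

(* Values of the kernel live in an arbitrary real field R
   (the paper uses the reals; the statement is purely order-theoretic). *)
From mathcomp Require Import all_boot all_order all_algebra.
Set Implicit Arguments. Unset Strict Implicit. Unset Printing Implicit Defensive.
Import Order.TTheory GRing.Theory Num.Theory.
Local Open Scope ring_scope.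

Definition strong_kernel (R : realFieldType) (X : Type) (k : X -> X -> R) : Prop :=
  [/\ (forall x y, k x y = k y x),
      (forall x y, 0 <= k x y) &
      (forall x y z, Num.min (k x z) (k z y) <= k x y)].

Definition kernel_image (R : realFieldType) (X : finType) (k : X -> X -> R) : seq R :=
  undup [seq k x y | x <- enum X, y <- enum X].

(* Take a pair x0 != y0 of points of S at which k is minimal, with value m.
   The strong triangle inequality makes the "ball" A = {x0} u {x | m < k(x0,x)}
   and its complement in S meet at the single value m: every cross value
   k(x,y) equals m.  Hence the image on S is covered by m together with the
   images on the two nonempty halves, and induction on |S| gives
   1 + (2|A| - 1) + (2|S \ A| - 1) = 2|S| - 1. *)
From mathcomp Require Import all_boot all_order all_algebra.
From mathcomp Require Import zify.
Set Implicit Arguments. Unset Strict Implicit. Unset Printing Implicit Defensive.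
Import Order.TTheory GRing.Theory Num.Theory.

Local Open Scope ring_scope.

Section StrongKernelImage.

Variables (R : realFieldType) (X : finType) (k : X -> X -> R).
Hypothesis k_sym : forall x y, k x y = k y x.
Hypothesis k_min : forall x y z, Num.min (k x z) (k z y) <= k x y.

Definition image_on (S : {set X}) : seq R :=
  undup [seq k x y | x <- enum S, y <- enum S].

Lemma image_onP (S : {set X}) v :
  reflect (exists x y, [/\ x \in S, y \in S & v = k x y]) (v \in image_on S).
Proof.
rewrite mem_undup; apply: (iffP allpairsPdep) => -[x [y [Sx Sy ->]]];
  by exists x, y; move: Sx Sy; rewrite !mem_enum.
Qed.

Lemma size_image_on_set1 x : (size (image_on [set x]) <= 1)%N.
Proof.
apply: (@uniq_leq_size _ _ [:: k x x]); first exact: undup_uniq.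
by move=> v /image_onP [y [z [/set1P-> /set1P-> ->]]]; rewrite inE.
Qed.

Lemma ball_cross_value (S : {set X}) x0 m :
    (forall x y, x \in S -> y \in S -> x != y -> m <= k x y) ->
  forall x y, x \in S -> y \in S ->
    (x == x0) || (m < k x0 x) -> ~~ ((y == x0) || (m < k x0 y)) -> k x y = m.
Proof.
move=> m_min x y Sx Sy Ax; rewrite negb_or -leNgt => /andP[y_neq_x0 x0y_le].
have x_neq_y : x != y by apply: contraTneq Ax => ->; rewrite negb_or y_neq_x0 -leNgt.
apply/eqP; rewrite eq_le m_min // andbT.
case/orP: Ax => [/eqP-> // | m_lt_x0x]; rewrite leNgt; apply/negP => m_lt_xy.
have := le_trans (k_min x0 y x) x0y_le.
by rewrite ge_min !leNgt m_lt_x0x m_lt_xy.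
Qed.

Lemma strong_kernel_split (S : {set X}) : (1 < #|S|)%N ->
  exists (A : {set X}) (m : R), [/\ A \subset S, A != set0, S :\: A != set0 &
                  forall x y, x \in A -> y \in S :\: A -> k x y = m].
Proof.
case/card_gt1P => x1 [y1 [Sx1 Sy1 x1y1]].
pose offdiag (p : X * X) := [&& p.1 \in S, p.2 \in S & p.1 != p.2].
have offdiag1 : offdiag (x1, y1) by apply/and3P.
have [[x0 y0] /and3P[/= Sx0 Sy0 x0y0] m_min] :=
  @arg_minP _ R _ (x1, y1) offdiag (fun p => k p.1 p.2) offdiag1.
pose A := [set x in S | (x == x0) || (k x0 y0 < k x0 x)].
exists A, (k x0 y0); split.
- by apply/subsetP => x; rewrite inE => /andP[].
- by apply/set0Pn; exists x0; rewrite inE Sx0 eqxx.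
- by apply/set0Pn; exists y0; rewrite !inE Sy0 andbT eq_sym (negbTE x0y0) ltxx.
move=> x y; rewrite !inE => /andP[Sx Ax] /andP[Ay Sy]; rewrite Sy in Ay.
apply: (ball_cross_value _ Sx Sy Ax Ay) => u v Su Sv uv.
by apply: (m_min (u, v)); apply/and3P.
Qed.

Lemma image_on_split (S A : {set X}) m :
    A \subset S -> (forall x y, x \in A -> y \in S :\: A -> k x y = m) ->
  {subset image_on S <= m :: image_on A ++ image_on (S :\: A)}.
Proof.
move=> AS cross v /image_onP [x [y [Sx Sy ->]]].
have split_S z : z \in S -> (z \in A) || (z \in S :\: A).
  by move=> Sz; rewrite in_setD Sz andbT orbN.
rewrite inE mem_cat.
case/orP: (split_S x Sx) => Ax; case/orP: (split_S y Sy) => Ay.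
- by apply/or3P; apply: Or32; apply/image_onP; exists x, y.
- by rewrite (cross x y) ?eqxx.
- by rewrite k_sym (cross y x) ?eqxx.
- by apply/or3P; apply: Or33; apply/image_onP; exists x, y.
Qed.

Lemma size_image_on (S : {set X}) :
  (0 < #|S|)%N -> (size (image_on S) <= (2 * #|S|).-1)%N.
Proof.
elim: {S}_.+1 {-2}S (ltnSn #|S|) => // n IH S S_lt S_gt0.
have [S_gt1 | ] := ltnP 1 #|S|; last first.
  move=> S_le1; have /cards1P[x ->] : #|S| == 1%N by rewrite eqn_leq S_le1.
  by rewrite cards1; apply: size_image_on_set1.
have [A [m [AS A_neq0 B_neq0 cross]]] := strong_kernel_split S_gt1.
have cardAB : (#|A| + #|S :\: A|)%N = #|S|.
  by rewrite cardsD (setIidPr AS) subnKC // subset_leq_card.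
move: A_neq0 B_neq0; rewrite -!card_gt0 => A_gt0 B_gt0.
have IHA : (size (image_on A) <= (2 * #|A|).-1)%N by apply: IH => //; lia.
have IHB : (size (image_on (S :\: A)) <= (2 * #|S :\: A|).-1)%N.
  by apply: IH => //; lia.
apply: leq_trans (uniq_leq_size (undup_uniq _) (image_on_split AS cross)) _.
by rewrite /= size_cat; lia.
Qed.

End StrongKernelImage.

Theorem mainTheorem4 (R : realFieldType) (X : finType) (k : X -> X -> R) :
  (0 < #|X|)%N -> strong_kernel k ->
  (size (kernel_image k) <= (2 * #|X|).-1)%N.
Proof.
move=> X_gt0 [k_sym _ k_min].
rewrite -cardsT in X_gt0 *.
apply: leq_trans (size_image_on k_sym k_min X_gt0).
apply: uniq_leq_size; first exact: undup_uniq.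
move=> v; rewrite mem_undup => /allpairsPdep [x [y [_ _ ->]]].
by apply/image_onP; exists x, y; rewrite !inE.
Qed.
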